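(* Consider the stochastic MPC scheme described in the context: the system $x(k+1)=Ax(k)+Bu(k)+w(k)$ under the control law $u(k)=Ke_0(k)+v_0^*(k)$ resulting from problem $(\mathcal{P}_k)$ (assumed feasible at the time steps considered), with nominal update $z_0(k)=z_1(k-1)$, $z(0)=x(0)$. Then, conditioned on $x(0)$, the predicted error at time $k$ has the same distribution as the closed-loop error, i.e. $e_i(k)\overset{d}{=}e(k+i)$ for $0\le i\le N$, where $e(k)=x(k)-z(k)$ with $z(k)=z_0(k)$.
   Context: System: $x(k+1)=Ax(k)+Bu(k)+w(k)$ with $x(k)\in\mathbb{R}^{n_x}$, $u(k)\in\mathbb{R}^{n_u}$, over a finite horizon $\bar N$; the disturbance sequence $W=[w(0)^\top,\dots,w(\bar N)^\top]^\top$ is a random vector with distribution $\mathcal{D}^W$ (not necessarily i.i.d. or zero mean). $\mathcal{X},\mathcal{U}$ convex sets; $\mathcal{A}\ominus\mathcal{B}=\{a\in\mathcal{A}: a+b\in\mathcal{A}\ \forall b\in\mathcal{B}\}$. A fixed gain $K$ is given; $\mathcal{R}^x_k,\mathcal{R}^u_k$ ($0\le k\le\bar N$) are given sets (probabilistic reachable sets used for tightening) and $\mathcal{Z}_f$ a terminal set. Problem $(\mathcal{P}_k)$ at time $k$: minimize over $v_0,\dots,v_{N-1}$ the cost $\mathbb{E}_{W_k}\big(l_f(x_N)+\sum_{i=0}^{N-1}l_{k+i}(x_i,u_i)\big)$ subject to $x_i=z_i+e_i$, $u_i=Ke_i+v_i$, $z_{i+1}=Az_i+Bv_i$, $e_{i+1}=(A+BK)e_i+w_i$,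 where $W_k=[w_0^\top,\dots,w_N^\top]^\top$ has the conditional distribution of $[w(k)^\top,\dots,w(k+N)^\top]^\top$ given the realized $[w(0)^\top,\dots,w(k-1)^\top]^\top$; constraints $z_i\in\mathcal{X}\ominus\mathcal{R}^x_{i+k}$, $v_i\in\mathcal{U}\ominus\mathcal{R}^u_{i+k}$ ($i=0,\dots,N-1$), $z_N\in\mathcal{Z}_f$; initialization $x_0=x(k)$, $z_0=z_1(k-1)$ (with $z_0(0)=x(0)$), $e_0=x_0-z_0$. Subscript quantities with argument $(k)$, e.g. $e_i(k)$, denote the predicted quantities in problem $(\mathcal{P}_k)$. The applied input is $u(k)=Ke_0(k)+v_0^*(k)$ with $v^*(k)$ optimal for $(\mathcal{P}_k)$. *)

From HB Require Import structures.
From mathcomp Require Import all_boot all_order all_algebra.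
From mathcomp Require Import all_classical all_reals.
From mathcomp Require Import topology normedtype sequences measure lebesgue_measure
  lebesgue_integral probability kernel.

Unset Printing Implicit Defensive.

Import Order.TTheory GRing.Theory Num.Theory.
Local Open Scope classical_set_scope.
Local Open Scope ring_scope.

(* The vector space R^n, represented by column vectors 'cV[R]_n,      *)
(* equipped with its Borel sigma-algebra (the sigma-algebra generated *)
(* by the coordinate projections, i.e. the product Borel algebra).    *)
Definition vec (R : realType) (n : nat) : Type := 'cV[R]_n.

Section vec_measurable.
Variables (R : realType) (n : nat).

HB.instance Definition _ := Choice.on (vec R n).
HB.instance Definition _ := isPointed.Build (vec R n) (0 : 'cV[R]_n).

Definition vec_coord : 'I_n -> vec R n -> R := fun i v => (v : 'cV[R]_n) i ord0.

Definition vec_measurable : set (set (vec R n)) := g_sigma_preimage vec_coord.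

Lemma vec_measurable0 : vec_measurable set0.
Proof. exact: sigma_algebra0. Qed.

Lemma vec_measurableC A : vec_measurable A -> vec_measurable (~` A).
Proof. exact: sigma_algebraC. Qed.

Lemma vec_measurable_bigcup (F : (set (vec R n))^nat) :
  (forall i, vec_measurable (F i)) -> vec_measurable (\bigcup_i F i).
Proof. exact: sigma_algebra_bigcup. Qed.

HB.instance Definition _ := @isMeasurable.Build default_measure_display
  (vec R n) vec_measurable vec_measurable0 vec_measurableC vec_measurable_bigcup.

End vec_measurable.

Definition pdiff {V : zmodType} (A B : set V) : set V :=
  [set a | A a /\ forall b, B b -> A (a + b)].

Definition convex_vset {R : realType} {m : nat} (C : set 'cV[R]_m) : Prop :=
  forall a b (t : R), C a -> C b -> 0 <= t <= 1 -> C (t *: a + (1 - t) *: b).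

Definition is_cond_distr {R : realType} {d : measure_display} {Omega : measurableType d}
  (P : probability Omega R) {dX dY : measure_display}
  {TX : measurableType dX} {TY : measurableType dY}
  (X : Omega -> TX) (Y : Omega -> TY) (kap : R.-pker TX ~> TY) : Prop :=
  forall (C : set TX) (D : set TY), measurable C -> measurable D ->
    P (X @^-1` C `&` Y @^-1` D) = (\int[P]_(om in X @^-1` C) kap (X om) D)%E.

Definition past {R : realType} {Omega : Type} {nx : nat}
  (w : nat -> Omega -> vec R nx) (k : nat) (om : Omega) : k.-tuple (vec R nx) :=
  [tuple w (nat_of_ord j) om | j < k].

Definition future {R : realType} {Omega : Type} {nx : nat}
  (w : nat -> Omega -> vec R nx) (N k : nat) (om : Omega) : N.+1.-tuple (vec R nx) :=
  [tuple w (k + nat_of_ord j)%N om | j < N.+1].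

Section prediction.
Variables (R : realType) (nx nu : nat).
Variables (A : 'M[R]_nx) (B : 'M[R]_(nx, nu)) (K : 'M[R]_(nu, nx)).

Fixpoint pred_err (e0 : 'cV[R]_nx) (Wk : seq (vec R nx)) (i : nat) : 'cV[R]_nx :=
  match i with
  | 0 => e0
  | i'.+1 => (A + B *m K) *m pred_err e0 Wk i' + nth (0 : 'cV[R]_nx) Wk i'
  end.

Fixpoint pred_nom (z0 : 'cV[R]_nx) (v : nat -> 'cV[R]_nu) (i : nat) : 'cV[R]_nx :=
  match i with
  | 0 => z0
  | i'.+1 => A *m pred_nom z0 v i' + B *m v i'
  end.

Definition mpc_feasible (N k : nat) (X : set 'cV[R]_nx) (U : set 'cV[R]_nu)
  (Rx : nat -> set 'cV[R]_nx) (Ru : nat -> set 'cV[R]_nu) (Zf : set 'cV[R]_nx)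
  (z0 : 'cV[R]_nx) (v : nat -> 'cV[R]_nu) : Prop :=
  (forall i, (i < N)%N ->
     pdiff X (Rx (i + k)%N) (pred_nom z0 v i) /\ pdiff U (Ru (i + k)%N) (v i))
  /\ Zf (pred_nom z0 v N).

(* cost of (P_k): expectation w.r.t. the (conditional) law mu of W_k *)
Definition mpc_cost (N k : nat) (l : nat -> 'cV[R]_nx -> 'cV[R]_nu -> R)
  (lf : 'cV[R]_nx -> R) (mu : {measure set (N.+1.-tuple (vec R nx)) -> \bar R})
  (x0 z0 : 'cV[R]_nx) (v : nat -> 'cV[R]_nu) : \bar R :=
  (\int[mu]_(Wk in setT)
     (lf (pred_nom z0 v N + pred_err (x0 - z0) Wk N)
      + \sum_(i < N) l (k + i)%N (pred_nom z0 v i + pred_err (x0 - z0) Wk i)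
                         (K *m pred_err (x0 - z0) Wk i + v i))%:E)%E.

Definition mpc_optimal (N k : nat) (X : set 'cV[R]_nx) (U : set 'cV[R]_nu)
  (Rx : nat -> set 'cV[R]_nx) (Ru : nat -> set 'cV[R]_nu) (Zf : set 'cV[R]_nx)
  (l : nat -> 'cV[R]_nx -> 'cV[R]_nu -> R) (lf : 'cV[R]_nx -> R)
  (mu : {measure set (N.+1.-tuple (vec R nx)) -> \bar R})
  (x0 z0 : 'cV[R]_nx) (v : nat -> 'cV[R]_nu) : Prop :=
  mpc_feasible N k X U Rx Ru Zf z0 v /\
  forall v', mpc_feasible N k X U Rx Ru Zf z0 v' ->
    (mpc_cost N k l lf mu x0 z0 v <= mpc_cost N k l lf mu x0 z0 v')%E.

(* Closed loop: returns (x(k), z(k)) with z(k) = z_0(k);               *)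
(* vstar k om is the (optimal) input sequence v*(k) computed at time k *)
Fixpoint closed_loop {Omega : Type} (x0 : 'cV[R]_nx)
  (w : nat -> Omega -> vec R nx) (vstar : nat -> Omega -> nat -> 'cV[R]_nu)
  (k : nat) (om : Omega) : 'cV[R]_nx * 'cV[R]_nx :=
  match k with
  | 0 => (x0, x0)
  | k'.+1 =>
    let xz := closed_loop x0 w vstar k' om in
    (A *m xz.1 + B *m (K *m (xz.1 - xz.2) + vstar k' om 0%N) + w k' om,
     A *m xz.2 + B *m vstar k' om 0%N)
  end.

End prediction.

Arguments pred_err {R nx nu} A B K e0 Wk i.
Arguments pred_nom {R nx nu} A B z0 v i.
Arguments mpc_feasible {R nx nu} A B N k X U Rx Ru Zf z0 v.
Arguments mpc_cost {R nx nu} A B K N k l lf mu x0 z0 v.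
Arguments mpc_optimal {R nx nu} A B K N k X U Rx Ru Zf l lf mu x0 z0 v.
Arguments closed_loop {R nx nu} A B K {Omega} x0 w vstar k om.

From HB Require Import structures.
From mathcomp Require Import all_boot all_order all_algebra.
From mathcomp Require Import all_classical all_reals.
From mathcomp Require Import topology normedtype sequences measure lebesgue_measure
  lebesgue_integral probability kernel.
From mathcomp Require Import ereal measurable_realfun.

Import Order.TTheory GRing.Theory Num.Theory.
Local Open Scope classical_set_scope.
Local Open Scope ring_scope.

(* The closed-loop error obeys e(j+1) = (A + B K) e(j) + w(j) whatever inputs
   are applied.  Hence e(k) is a measurable function of the past disturbances
   w(0), ..., w(k-1), and e(k+i) is obtained from e(k) and the window
   W_k = (w(k), ..., w(k+N)) by the recursion that defines the predicted error
   e_i(k).  So {e(k+i) in S} = {(past, W_k) in E} for a measurable E, and it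
   remains to disintegrate the joint law of (past, W_k) along the conditional
   law of W_k: both sides are measures in E that agree on rectangles, hence
   everywhere. *)

Section conditional_distribution.
Local Open Scope ereal_scope.
Context {R : realType} {d} {Omega : measurableType d} (P : probability Omega R)
  {d1 d2} {T1 : measurableType d1} {T2 : measurableType d2}
  (X : Omega -> T1) (Y : Omega -> T2) (kap : R.-pker T1 ~> T2).
Hypotheses (mX : measurable_fun setT X) (mY : measurable_fun setT Y).

Definition kernel_joint (E : set (T1 * T2)) : \bar R :=
  \int[P]_(om in setT) kap (X om) (xsection E (X om)).

Let measurable_kernel_xsection E : measurable E ->
  measurable_fun setT (fun om => kap (X om) (xsection E (X om))).
Proof.
move=> mE.
exact: measurableT_comp (measurable_fun_xsection_finite_kernel kap (mem_set mE)) mX.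
Qed.

Let kernel_joint0 : kernel_joint set0 = 0.
Proof. by apply: integral0_eq => om _; rewrite xsection0 measure0. Qed.

Let kernel_joint_ge0 E : 0 <= kernel_joint E.
Proof. exact: integral_ge0. Qed.

Let kernel_joint_sigma_additive : semi_sigma_additive kernel_joint.
Proof.
move=> F mF tF mUF; have -> : kernel_joint (\bigcup_n F n) =
    \int[P]_(om in setT) \sum_(n <oo) kap (X om) (xsection (F n) (X om)).
  apply: eq_integral => om _; rewrite xsection_bigcup.
  apply/esym/cvg_lim => //; apply: measure_sigma_additive.
    by move=> n; apply: measurable_xsection.
  exact: trivIset_xsection.
rewrite integral_nneseries //; last by move=> n; apply: measurable_kernel_xsection.
by apply: is_cvg_nneseries => n _ _; apply: integral_ge0.
Qed.

HB.instance Definition _ := isMeasure.Build _ _ _ kernel_joint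
  kernel_joint0 kernel_joint_ge0 kernel_joint_sigma_additive.

Definition pair_rv (om : Omega) : T1 * T2 := (X om, Y om).

Let measurable_pair_rv : measurable_fun setT pair_rv.
Proof. exact/measurable_fun_pairP. Qed.

HB.instance Definition _ := isMeasurableFun.Build _ _ _ _ pair_rv measurable_pair_rv.

Hypothesis XYkap : is_cond_distr P X Y kap.

Lemma is_cond_distr_joint E : measurable E ->
  P (pair_rv @^-1` E) = \int[P]_(om in setT) kap (X om) (xsection E (X om)).
Proof.
move=> mE; apply: (measure_unique [set A `*` B | A in measurable & B in measurable]
  (fun _ => setT) _ _ _ _ (distribution P pair_rv) kernel_joint) => //.
- exact: measurable_prod_measurableType.
- move=> _ _ [A mA [B mB <-]] [C mC [D mD <-]]; rewrite -setXI.
  by exists (A `&` C); [exact: measurableI | exists (B `&` D) => //; exact: measurableI].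
- by move=> _; exists setT => //; exists setT => //; rewrite setXTT.
- by rewrite bigcup_const.
- move=> _ [A mA [B mB <-]].
  rewrite -[LHS]/(P (X @^-1` A `&` Y @^-1` B)) /kernel_joint.
  rewrite XYkap // integral_mkcond; apply: eq_integral => om _.
  rewrite /patch; case: ifPn => XAom; last by rewrite notin_xsectionX ?measure0.
  by rewrite in_xsectionX // inE; rewrite inE in XAom.
- by move=> _ /=; rewrite probability_setT ltry.
Qed.

End conditional_distribution.
Arguments is_cond_distr_joint {R d Omega P d1 d2 T1 T2 X Y kap}.

Section vec_measurability.
Context (R : realType) d (T : measurableType d).

Lemma measurable_vec_coord {n} (i : 'I_n) : measurable_fun setT (vec_coord R n i).
Proof.
move=> _ Y mY; rewrite setTI; apply: sub_sigma_algebra.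
rewrite -bigcup_seq; exists i; first by rewrite /= mem_index_enum.
by exists Y => //; rewrite setTI.
Qed.

Lemma measurable_fun_vec n (f : T -> vec R n) :
  (forall i, measurable_fun setT (vec_coord R n i \o f)) -> measurable_fun setT f.
Proof.
move=> mf _ A mA; move: A mA; apply: smallest_sub.
  exact: (sigma_algebra_image f (@sigma_algebra_measurable _ T)).
case: n => [|n] in f mf *; first by rewrite big_ord0.
rewrite -bigcup_mkord_ord; apply: bigcup_sub => i _ B [C mC <-].
by rewrite [in f @^-1` _]setTI -comp_preimage; exact: mf.
Qed.

Lemma measurable_mulmx_add m n (M : 'M[R]_(m, n)) (f : T -> vec R n) (g : T -> vec R m) :
  measurable_fun setT f -> measurable_fun setT g ->
  measurable_fun setT (fun t => M *m f t + g t : vec R m).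
Proof.
move=> mf mg; apply: measurable_fun_vec => i.
rewrite (_ : _ \o _ = fun t => \sum_j M i j * vec_coord R n j (f t) + vec_coord R m i (g t)).
  apply: measurable_funD; last exact: measurableT_comp (measurable_vec_coord i) mg.
  apply: measurable_sum => j; apply: measurable_funM; first exact: measurable_cst.
  exact: measurableT_comp (measurable_vec_coord j) mf.
by apply: funext => t; rewrite /vec_coord /= !mxE.
Qed.

Lemma measurable_nth_tuple m n (W : T -> n.-tuple (vec R m)) j :
  measurable_fun setT W -> measurable_fun setT (fun t => nth 0 (W t) j : vec R m).
Proof.
move=> mW; have [ltjn|lenj] := ltnP j n.
  rewrite (_ : (fun t => _) = (fun t => tnth (W t) (Ordinal ltjn))).
    exact: measurableT_comp (measurable_tnth _) mW.
  by apply: funext => t; rewrite (tnth_nth 0).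
rewrite (_ : (fun t => _) = cst 0); first exact: measurable_cst.
by apply: funext => t; rewrite nth_default // size_tuple.
Qed.

Lemma measurable_pred_err nx nu (A : 'M[R]_nx) (B : 'M[R]_(nx, nu)) (K : 'M[R]_(nu, nx))
    (e0 : T -> vec R nx) n (W : T -> n.-tuple (vec R nx)) i :
  measurable_fun setT e0 -> measurable_fun setT W ->
  measurable_fun setT (fun t => pred_err A B K (e0 t) (W t) i : vec R nx).
Proof.
move=> me0 mW; elim: i => [|i IHi] //=.
by apply: measurable_mulmx_add => //; exact: measurable_nth_tuple.
Qed.

End vec_measurability.

Section error_dynamics.
Context {R : realType} {nx nu : nat} (A : 'M[R]_nx) (B : 'M[R]_(nx, nu))
  (K : 'M[R]_(nu, nx)).

Lemma pred_err_trajectory (e u : nat -> 'cV[R]_nx) k (Wk : seq 'cV[R]_nx) i :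
  (forall j, e j.+1 = (A + B *m K) *m e j + u j) ->
  (forall j, (j < i)%N -> nth 0 Wk j = u (k + j)%N) ->
  e (k + i)%N = pred_err A B K (e k) Wk i.
Proof.
move=> e_succ Wk_u; elim: i => [|i IHi] in Wk_u *; first by rewrite addn0.
by rewrite addnS e_succ /= IHi ?Wk_u // => j ltji; apply/Wk_u/ltnW.
Qed.

Section closed_loop_error.
Context {Omega : Type} (x0 : 'cV[R]_nx) (w : nat -> Omega -> vec R nx)
  (vstar : nat -> Omega -> nat -> 'cV[R]_nu).

Definition closed_loop_err j om : 'cV[R]_nx :=
  (closed_loop A B K x0 w vstar j om).1 - (closed_loop A B K x0 w vstar j om).2.

Lemma closed_loop_err0 om : closed_loop_err 0 om = 0.
Proof. exact: subrr. Qed.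

Lemma closed_loop_errS j om :
  closed_loop_err j.+1 om = (A + B *m K) *m closed_loop_err j om + w j om.
Proof.
rewrite /closed_loop_err /=.
set x := (closed_loop _ _ _ _ _ _ j om).1; set z := (closed_loop _ _ _ _ _ _ j om).2.
rewrite mulmxDl [A *m (x - z)]mulmxBr mulmxDr -mulmxA opprD !addrA.
rewrite addrAC [X in X - _]addrAC addrK.
by rewrite [in RHS](addrAC (A *m x)) [RHS](addrAC _ (- (A *m z))).
Qed.

Lemma closed_loop_err_past k om :
  closed_loop_err k om = pred_err A B K 0 (past w k om) k.
Proof.
rewrite -(closed_loop_err0 om) -[k in LHS]add0n.
apply: (pred_err_trajectory (closed_loop_err^~ om) (w^~ om) 0 (past w k om) k).
  by move=> j; rewrite closed_loop_errS.
move=> j ltjk.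
by rewrite -[j]/(val (Ordinal ltjk)) nth_mktuple.
Qed.

Lemma closed_loop_err_future N k i om : (i <= N.+1)%N ->
  closed_loop_err (k + i) om =
  pred_err A B K (closed_loop_err k om) (future w N k om) i.
Proof.
move=> leiN.
apply: (pred_err_trajectory (closed_loop_err^~ om) (w^~ om) k (future w N k om) i).
  by move=> j; rewrite closed_loop_errS.
move=> j ltji.
have ltjN : (j < N.+1)%N by apply: leq_trans leiN.
by rewrite -[j]/(val (Ordinal ltjN)) nth_mktuple.
Qed.

End closed_loop_error.
End error_dynamics.

Section disturbance_windows.
Context {R : realType} {d} {Omega : measurableType d} {nx : nat}
  (w : nat -> Omega -> vec R nx).

Lemma measurable_past k :
  (forall j, (j < k)%N -> measurable_fun setT (w j)) ->
  measurable_fun setT (past w k).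
Proof.
move=> mw; apply/measurable_fun_tnthP => j.
rewrite (_ : _ \o _ = w j); first exact/mw/ltn_ord.
by apply: funext => om; rewrite /= tnth_mktuple.
Qed.

Lemma measurable_future N k :
  (forall j, (j <= N)%N -> measurable_fun setT (w (k + j)%N)) ->
  measurable_fun setT (future w N k).
Proof.
move=> mw; apply/measurable_fun_tnthP => j.
rewrite (_ : _ \o _ = w (k + j)%N); first by apply: mw; rewrite -ltnS.
by apply: funext => om; rewrite /= tnth_mktuple.
Qed.

End disturbance_windows.

Theorem lemma1 (R : realType) (nx nu Nbar N : nat)
  (A : 'M[R]_nx) (B : 'M[R]_(nx, nu)) (K : 'M[R]_(nu, nx))
  (X : set 'cV[R]_nx) (U : set 'cV[R]_nu)
  (Rx : nat -> set 'cV[R]_nx) (Ru : nat -> set 'cV[R]_nu) (Zf : set 'cV[R]_nx)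
  (l : nat -> 'cV[R]_nx -> 'cV[R]_nu -> R) (lf : 'cV[R]_nx -> R)
  (d : measure_display) (Omega : measurableType d) (P : probability Omega R)
  (w : nat -> Omega -> vec R nx)
  (kap : forall k : nat, R.-pker (k.-tuple (vec R nx)) ~> (N.+1.-tuple (vec R nx)))
  (x0 : 'cV[R]_nx) (vstar : nat -> Omega -> nat -> 'cV[R]_nu) :
  (0 < N)%N ->
  convex_vset X -> convex_vset U ->
  (forall j, (j <= Nbar)%N -> measurable_fun setT (w j)) ->
  (* W_k has the conditional law kap k given (w(0),...,w(k-1)) *)
  (forall k, (k + N <= Nbar)%N ->
     is_cond_distr P (past w k) (future w N k) (kap k)) ->
  (* closed loop: v*(k) is optimal for the feasible problem (P_k) *)
  (forall k, (k + N <= Nbar)%N -> forall om,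
     let xz := closed_loop A B K x0 w vstar k om in
     mpc_optimal A B K N k X U Rx Ru Zf l lf (kap k (past w k om))
       xz.1 xz.2 (vstar k om)) ->
  forall k i, (k + N <= Nbar)%N -> (i <= N)%N ->
  forall S : set (vec R nx), measurable S ->
    let e := fun j om => (closed_loop A B K x0 w vstar j om).1
                        - (closed_loop A B K x0 w vstar j om).2 in
    P [set om | S (e (k + i)%N om)] =
    (\int[P]_(om in setT)
       kap k (past w k om)
         [set Wk : N.+1.-tuple (vec R nx) | S (pred_err A B K (e k om) Wk i)])%E.
Proof.
move=> _ _ _ mw cond_future _ k i leNbar leiN S mS e.
have mpast : measurable_fun setT (past w k).
  apply: measurable_past => j ltjk; apply: mw; apply: leq_trans leNbar.
  exact: leq_trans (ltnW ltjk) (leq_addr N k).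
have mfuture : measurable_fun setT (future w N k).
  apply: measurable_future => j lejN; apply: mw; apply: leq_trans leNbar.
  by rewrite leq_add2l.
pose E := [set pw : k.-tuple (vec R nx) * N.+1.-tuple (vec R nx) |
  S (pred_err A B K (pred_err A B K 0 pw.1 k) pw.2 i)].
have mE : measurable E.
  have mpred : measurable_fun setT
      (fun pw : k.-tuple (vec R nx) * N.+1.-tuple (vec R nx) =>
         pred_err A B K (pred_err A B K 0 pw.1 k) pw.2 i : vec R nx).
    apply: measurable_pred_err; last exact: measurable_snd.
    by apply: measurable_pred_err; [exact: measurable_cst | exact: measurable_fst].
  by rewrite -[E]setTI; exact: mpred.
have eE j om : e j om = closed_loop_err A B K x0 w vstar j om by [].
have -> : [set om | S (e (k + i)%N om)] = pair_rv (past w k) (future w N k) @^-1` E.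
  apply/funext => om /=; rewrite eE (closed_loop_err_future A B K x0 w vstar N).
    by rewrite closed_loop_err_past.
  exact: leqW.
rewrite (is_cond_distr_joint mpast mfuture (cond_future k leNbar) _ mE).
apply: eq_integral => om _; congr (kap k _ _); apply/funext => Wk.
by rewrite /xsection /E /= inE eE closed_loop_err_past.
Qed.
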